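(* Let $\rho$ be a state and $\phi$ a pure state not in $\mathcal F$ (of the output space). If there exists a probabilistic resource--non-generating transformation $\rho\to\tau$, where $\tau$ is a state with $F(\tau,\phi)\ge1-\varepsilon$, then $\varepsilon\ge\frac{1-F_{\mathcal F}(\phi)}{\Omega_{\mathcal F}(\rho)}\ge\frac{\lambda_{\min}(\rho)(1-F_{\mathcal F}(\phi))}{R_{\mathcal F}(\rho)}$, where $\lambda_{\min}(\rho)$ is the smallest eigenvalue of $\rho$.
   Context: Finite dimensions; $A\le B$ means $B-A\ge0$. Each space carries a closed convex set $\mathcal F$ of free density operators. $R_{\max}(X\|Y)=\inf\{\lambda:X\le\lambda Y\}$, conventions $\inf\emptyset=\infty$, $0^{-1}=\infty$, $\infty^{-1}=0$. $R_{\mathcal F}(\rho)=\min_{\sigma\in\mathcal F}R_{\max}(\rho\|\sigma)$; $\Omega_{\mathcal F}(\rho)=\inf_{\sigma\in\mathcal F}R_{\max}(\rho\|\sigma)R_{\max}(\sigma\|\rho)$; $F_{\mathcal F}(\phi)=\max_{\sigma\in\mathcal F}\langle\phi|\sigma|\phi\rangle$. Fidelity $F(\rho,\sigma)=\|\sqrt\rho\sqrt\sigma\|_1^2$. $\mathbb O$: completely positive trace-non-increasing maps $\mathcal E$ such that for every free input $\sigma$ there exist a free output $\sigma'$ and $p\in[0,1]$ with $\mathcal E(\sigma)=p\sigma'$. A probabilistic transformation $\rho\to\tau$ exists iff $\tau$ lies in the closure of $\{\mathcal E(\rho)/\mathrm{Tr}\,\mathcal E(\rho):\mathcal E\in\mathbb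 O,\ \mathrm{Tr}\,\mathcal E(\rho)>0\}$. *)

(* Complex numbers are R[i] (mathcomp-real-closed)
   over an arbitrary realType R, seen as a numClosedFieldType so that the
   (product) topology of MathComp-Analysis applies to complex matrices. *)
From HB Require Import structures.
From mathcomp Require Import all_boot all_order all_algebra.
From mathcomp Require Import complex.
From mathcomp Require Import all_classical all_reals all_analysis.

Set Implicit Arguments.
Unset Strict Implicit.
Unset Printing Implicit Defensive.

Import Order.TTheory GRing.Theory Num.Theory.
Import numFieldTopology.Exports.
Local Open Scope ring_scope.
Local Open Scope classical_set_scope.

Definition C (R : realType) : numClosedFieldType := R[i].

Section QRT.
Variable R : realType.
Local Notation C := (C R).

Definition toC (x : R) : C := (x%:C)%C.
Definition reC (z : C) : R := complex.Re z.

Definition dag m n (A : 'M[C]_(m, n)) : 'M[C]_(n, m) := (map_mx Num.conj A)^T.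

(* positive semidefiniteness of a kernel K on a finite index type:
   <v, K v> >= 0 for all v (in C; "0 <= z" means z is real and nonnegative) *)
Definition psdf (T : finType) (K : T -> T -> C) : Prop :=
  forall v : T -> C, 0 <= \sum_(x : T) \sum_(y : T) (v x)^* * K x y * v y.

Definition psd n (A : 'M[C]_n) : Prop := psdf (fun i j => A i j).

Definition lemx n (A B : 'M[C]_n) : Prop := psd (B - A).

Definition density n (A : 'M[C]_n) : Prop := psd A /\ \tr A = 1.

Definition unit_vec m (phi : 'cV[C]_m) : Prop := dag phi *m phi = 1%:M.
Definition pure_proj m (phi : 'cV[C]_m) : 'M[C]_m := phi *m dag phi.

Definition convex_set n (F : set 'M[C]_n) : Prop :=
  forall x y, F x -> F y -> forall t : R, 0 <= t <= 1 ->
    F (toC t *: x + toC (1 - t) *: y).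

Definition free_set n (F : set 'M[C]_n) : Prop :=
  closed F /\ convex_set F /\ (forall s, F s -> density s).

(* R_max(X||Y) = inf {lambda : X <= lambda Y}, inf of the empty set = +oo *)
Definition Rmax n (X Y : 'M[C]_n) : \bar R :=
  ereal_inf [set l%:E | l in [set l : R | lemx X (toC l *: Y)]].

Definition RF n (F : set 'M[C]_n) (rho : 'M[C]_n) : \bar R :=
  ereal_inf [set Rmax rho s | s in F].

Definition OmegaF n (F : set 'M[C]_n) (rho : 'M[C]_n) : \bar R :=
  ereal_inf [set (Rmax rho s * Rmax s rho)%E | s in F].

Definition FF m (F : set 'M[C]_m) (phi : 'cV[C]_m) : \bar R :=
  ereal_sup [set (reC ((dag phi *m s *m phi) 0 0))%:E | s in F].

(* reciprocals on extended reals use MathComp-Analysis' inve (x^-1 in ereal_scope),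
   which satisfies 0^-1 = +oo and +oo^-1 = 0 *)

Definition msqrt n (A : 'M[C]_n) : 'M[C]_n :=
  xget 0 [set B | psd B /\ B *m B = A].

Definition trnorm n (A : 'M[C]_n) : R := reC (\tr (msqrt (dag A *m A))).

Definition fidelity n (rho sigma : 'M[C]_n) : R :=
  trnorm (msqrt rho *m msqrt sigma) ^+ 2.

Definition lmin n (A : 'M[C]_n) : R := inf [set x : R | eigenvalue A (toC x)].

(* complete positivity: id_k (x) E is positive for every ancilla dimension k *)
Definition cp n m (E : 'M[C]_n -> 'M[C]_m) : Prop :=
  forall (k : nat) (X : 'I_k * 'I_n -> 'I_k * 'I_n -> C),
    psdf X ->
    psdf (fun p q : 'I_k * 'I_m =>
            E (\matrix_(i, j) X (p.1, i) (q.1, j)) p.2 q.2).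

Definition tni n m (E : 'M[C]_n -> 'M[C]_m) : Prop :=
  forall X, psd X -> \tr (E X) <= \tr X.

Definition RNG n m (Fin : set 'M[C]_n) (Fout : set 'M[C]_m)
    (E : {linear 'M[C]_n -> 'M[C]_m}) : Prop :=
  cp E /\ tni E /\
  forall s, Fin s -> exists s' (p : R), Fout s' /\ 0 <= p <= 1 /\ E s = toC p *: s'.

Definition prob_trans n m (Fin : set 'M[C]_n) (Fout : set 'M[C]_m)
    (rho : 'M[C]_n) (tau : 'M[C]_m) : Prop :=
  closure [set (\tr (E rho))^-1 *: E rho |
            E in [set E : {linear 'M[C]_n -> 'M[C]_m} |
                   RNG Fin Fout E /\ 0 < \tr (E rho)]] tau.

End QRT.

(* If rho <= a s and s <= b rho for a free state s, then every E in O maps s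
   to p s' with s' free, and positivity of E(a s - rho) and of E(b rho - s)
   gives 1 - <phi|s'|phi> <= a b (1 - <phi|E(rho)|phi> / Tr E(rho)).  As
   <phi|s'|phi> <= F_F(phi) and <phi|.|phi> is continuous, every reachable tau
   satisfies 1 - F_F(phi) <= a b (1 - <phi|tau|phi>), and
   1 - <phi|tau|phi> <= 1 - F(tau, phi) <= eps; the infimum over s, a, b is
   Omega_F(rho).  For the second bound, every free s satisfies
   s <= 1 <= lambda_min(rho)^-1 rho, so Omega_F(rho) <= R_F(rho) / lambda_min(rho). *)

From mathcomp Require Import all_boot all_order all_algebra.
From mathcomp Require Import complex.
From mathcomp Require Import all_classical all_reals all_analysis.
From mathcomp Require Import ring lra.
Import Order.TTheory GRing.Theory Num.Theory.
Import numFieldTopology.Exports.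
Local Open Scope ring_scope.
Local Open Scope classical_set_scope.
Set Implicit Arguments. Unset Strict Implicit. Unset Printing Implicit Defensive.

Section Matrices.
Variable R : realType.
Local Notation C := (C R).

Lemma dagE m n (A : 'M[C]_(m, n)) i j : dag A i j = (A j i)^*.
Proof. by rewrite /dag !mxE. Qed.

Lemma dagK m n (A : 'M[C]_(m, n)) : dag (dag A) = A.
Proof. by apply/matrixP => i j; rewrite !dagE conjCK. Qed.

Lemma dagM m n p (A : 'M[C]_(m, n)) (B : 'M[C]_(n, p)) :
  dag (A *m B) = dag B *m dag A.
Proof.
apply/matrixP => i j; rewrite dagE !mxE rmorph_sum; apply: eq_bigr => k _.
by rewrite !dagE rmorphM mulrC.
Qed.

Lemma dagD m n (A B : 'M[C]_(m, n)) : dag (A + B) = dag A + dag B.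
Proof. by apply/matrixP => i j; rewrite dagE [RHS]mxE !dagE mxE rmorphD. Qed.

Lemma dagB m n (A B : 'M[C]_(m, n)) : dag (A - B) = dag A - dag B.
Proof. by apply/matrixP => i j; rewrite dagE [RHS]mxE !dagE !mxE rmorphB. Qed.

Lemma dagZ m n a (A : 'M[C]_(m, n)) : dag (a *: A) = a^* *: dag A.
Proof. by apply/matrixP => i j; rewrite dagE [RHS]mxE !dagE mxE rmorphM. Qed.

Lemma dag1 n : dag (1%:M : 'M[C]_n) = 1%:M.
Proof. by apply/matrixP => i j; rewrite dagE !mxE eq_sym rmorph_nat. Qed.

Lemma dag_delta n (i : 'I_n) : dag (delta_mx i 0 : 'cV[C]_n) = delta_mx 0 i.
Proof. by apply/matrixP => a b; rewrite dagE !mxE rmorph_nat andbC. Qed.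

Lemma dagmx_mul_self_ge0 m n (A : 'M[C]_(m, n)) j : 0 <= (dag A *m A) j j.
Proof.
by rewrite mxE; apply: sumr_ge0 => i _; rewrite dagE mulrC mul_conjC_ge0.
Qed.

Lemma dagmx_mul_self_eq0 m n (A : 'M[C]_(m, n)) : dag A *m A = 0 -> A = 0.
Proof.
move=> AA0; apply/matrixP => i j; rewrite [RHS]mxE.
have := congr1 (fun M : 'M[C]_n => M j j) AA0; rewrite [LHS]mxE [RHS]mxE.
move/eqP; rewrite psumr_eq0; last by move=> k _; rewrite dagE mulrC mul_conjC_ge0.
move/allP/(_ i (mem_index_enum _)); rewrite implyTb dagE mulrC mul_conjC_eq0.
by move/eqP.
Qed.

Definition sform n (A : 'M[C]_n) (u v : 'cV[C]_n) : C := (dag u *m A *m v) 0 0.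
Definition qform n (A : 'M[C]_n) (v : 'cV[C]_n) : C := sform A v v.

Lemma sform_delta n (A : 'M[C]_n) i j :
  sform A (delta_mx i 0) (delta_mx j 0) = A i j.
Proof. by rewrite /sform dag_delta -rowE -colE !mxE. Qed.

Lemma sformDl n (A : 'M[C]_n) u1 u2 v :
  sform A (u1 + u2) v = sform A u1 v + sform A u2 v.
Proof. by rewrite /sform dagD !mulmxDl [LHS]mxE. Qed.

Lemma sformDr n (A : 'M[C]_n) u v1 v2 :
  sform A u (v1 + v2) = sform A u v1 + sform A u v2.
Proof. by rewrite /sform !mulmxDr [LHS]mxE. Qed.

Lemma sformZl n (A : 'M[C]_n) c u v : sform A (c *: u) v = c^* * sform A u v.
Proof. by rewrite /sform dagZ -!scalemxAl [LHS]mxE. Qed.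

Lemma sformZr n (A : 'M[C]_n) c u v : sform A u (c *: v) = c * sform A u v.
Proof. by rewrite /sform -!scalemxAr [LHS]mxE. Qed.

Lemma qformE n (A : 'M[C]_n) v :
  qform A v = \sum_x \sum_y (v x 0)^* * A x y * v y 0.
Proof.
rewrite /qform /sform mxE exchange_big /=; apply: eq_bigr => y _.
by rewrite mxE mulr_suml; apply: eq_bigr => x _; rewrite dagE.
Qed.

Lemma qformDv n (A : 'M[C]_n) u v c :
  qform A (u + c *: v) =
  qform A u + c * sform A u v + c^* * sform A v u + c^* * c * qform A v.
Proof.
rewrite /qform sformDl !sformDr !sformZl !sformZr !addrA mulrA.
by congr (_ + _); rewrite addrAC.
Qed.

Lemma qformZv n (A : 'M[C]_n) c v : qform A (c *: v) = c^* * c * qform A v.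
Proof. by rewrite /qform sformZl sformZr mulrA. Qed.

Lemma qformD n (A B : 'M[C]_n) v : qform (A + B) v = qform A v + qform B v.
Proof. by rewrite /qform /sform mulmxDr mulmxDl [LHS]mxE. Qed.

Lemma qformZ n a (A : 'M[C]_n) v : qform (a *: A) v = a * qform A v.
Proof. by rewrite /qform /sform -scalemxAr -scalemxAl [LHS]mxE. Qed.

Lemma qformB n (A B : 'M[C]_n) v : qform (A - B) v = qform A v - qform B v.
Proof. by rewrite qformD -scaleN1r qformZ mulN1r. Qed.

Lemma qform0v n (A : 'M[C]_n) : qform A 0 = 0.
Proof. by rewrite /qform /sform mulmx0 mxE. Qed.

Lemma qform0 n (v : 'cV[C]_n) : qform 0 v = 0.
Proof. by rewrite /qform /sform mulmx0 mul0mx mxE. Qed.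

Lemma psdE n (A : 'M[C]_n) : psd A <-> forall v, 0 <= qform A v.
Proof.
split => [psdA v|qA w]; first by rewrite qformE; apply: (psdA (fun x => v x 0)).
have := qA (\col_i w i); rewrite qformE.
by under eq_bigr do under eq_bigr do rewrite !mxE.
Qed.

(* Polarization: the quadratic form of A is real on the vectors e_j + e_i and
   e_j + 'i e_i, which forces A j i = (A i j)^*. *)
Lemma psd_herm n (A : 'M[C]_n) : psd A -> dag A = A.
Proof.
move/psdE => psdA; apply/matrixP => i j; rewrite dagE.
have real_qform v : (qform A v)^* = qform A v.
  exact/conj_Creal/ger0_real/psdA.
have real_diag k : (A k k)^* = A k k by rewrite -sform_delta; apply: real_qform.
have h1 := real_qform (delta_mx j 0 + 1 *: delta_mx i 0).
have h2 := real_qform (delta_mx j 0 + 'i *: delta_mx i 0).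
rewrite qformDv in h1; rewrite qformDv /qform !sform_delta in h2.
rewrite /qform !sform_delta in h1.
have conjD (x y : C) : (x + y)^* = x^* + y^* by exact: rmorphD.
have conjM (x y : C) : (x * y)^* = x^* * y^* by exact: rmorphM.
have conjN (x : C) : (- x)^* = - x^* by exact: rmorphN.
rewrite !conjD !conjM ?conjCK !real_diag !conjC1 ?conjCi ?conjN ?conjCi ?opprK
  in h1 h2.
have ii : 'i * 'i = -1 :> C by rewrite -expr2 sqrCi.
move: h1 h2 ii; set u := A j i; set w := A i j; set p := A j j; set q := A i i.
set I := 'i; clearbody u w p q I => h1 h2 ii.
apply/eqP; rewrite -subr_eq0; apply/eqP.
have two_neq0 : (2 : C) != 0 by rewrite pnatr_eq0.
apply: (mulfI two_neq0); rewrite mulr0.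
have -> : 2 * (u^* - w) =
    ((p + 1 * u^* + 1 * w^* + 1 * 1 * q) - (p + 1 * u + 1 * w + 1 * 1 * q))
  + I * ((p + - I * u^* + I * w^* + I * - I * q)
         - (p + I * u + - I * w + - I * I * q))
  - (I * I + 1) * (w^* - u^* - u + w) by ring.
by rewrite h1 h2 ii !subrr; ring.
Qed.

Lemma psdD n (A B : 'M[C]_n) : psd A -> psd B -> psd (A + B).
Proof.
by move=> /psdE psdA /psdE psdB; apply/psdE => v; rewrite qformD addr_ge0.
Qed.

Lemma psdZ n a (A : 'M[C]_n) : 0 <= a -> psd A -> psd (a *: A).
Proof. by move=> a0 /psdE psdA; apply/psdE => v; rewrite qformZ mulr_ge0. Qed.

Lemma psd_congr n k (A : 'M[C]_n) (B : 'M[C]_(n, k)) :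
  psd A -> psd (dag B *m A *m B).
Proof.
move=> /psdE psdA; apply/psdE => v; have := psdA (B *m v).
by rewrite /qform /sform dagM !mulmxA.
Qed.

Lemma psd1 n : psd (1%:M : 'M[C]_n).
Proof. by apply/psdE => v; rewrite /qform /sform mulmx1 dagmx_mul_self_ge0. Qed.

Lemma psd_tr_ge0 n (A : 'M[C]_n) : psd A -> 0 <= \tr A.
Proof.
by move/psdE => psdA; apply: sumr_ge0 => i _; rewrite -sform_delta psdA.
Qed.

Lemma msqrtP n (A : 'M[C]_n) :
  msqrt A = 0 \/ psd (msqrt A) /\ msqrt A *m msqrt A = A.
Proof. by rewrite /msqrt; case: xgetP => [B _ [psdB BB]|_]; [right|left]. Qed.

End Matrices.

Section Complex.
Variable R : realType.
Local Notation C := (C R).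

Lemma reC_le (x y : C) : x <= y -> reC x <= reC y.
Proof. by rewrite lecE => /andP[]. Qed.

Lemma reC_lt (x y : C) : x < y -> reC x < reC y.
Proof. by rewrite ltcE => /andP[]. Qed.

Lemma reCB (x y : C) : reC (x - y) = reC x - reC y. Proof. by case: x; case: y. Qed.

Lemma reCMl r (x : C) : reC (toC r * x) = r * reC x.
Proof. by case: x => u v; rewrite /reC /toC /= mul0r subr0. Qed.

Lemma reC_toC (r : R) : reC (toC r) = r. Proof. by []. Qed.

Lemma toC_reC (z : C) : complex.Im z = 0 -> toC (reC z) = z.
Proof. by case: z => u v /= ->. Qed.

Lemma toCM r s : toC (r * s) = toC r * toC s :> C.
Proof. exact: rmorphM. Qed.

Lemma toCV r : toC r^-1 = (toC r)^-1 :> C.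
Proof. exact: fmorphV. Qed.

Lemma toC_ge0 r : (0 <= toC r :> C) = (0 <= r).
Proof. exact: lecR. Qed.

Lemma reC_sqr (z : C) : complex.Im z = 0 -> reC (z ^+ 2) = reC z ^+ 2.
Proof. by case: z => a b /= ->; rewrite /reC !expr2 /= mulr0 subr0. Qed.

End Complex.

Section PureState.
Variable R : realType.
Local Notation C := (C R).
Variables (m : nat) (phi : 'cV[C]_m).
Hypothesis unit_phi : unit_vec phi.
Local Notation P := (pure_proj phi).

Lemma pure_proj_idem : P *m P = P.
Proof. by rewrite /pure_proj mulmxA -(mulmxA phi) unit_phi mulmx1. Qed.

Lemma dag_pure_proj : dag P = P.
Proof. by rewrite /pure_proj dagM dagK. Qed.

Lemma psd_pure_proj : psd P.
Proof. by have := psd_congr (dag phi) (@psd1 R 1); rewrite dagK mulmx1. Qed.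

Lemma tr_pure_proj : \tr P = 1.
Proof. by rewrite /pure_proj mxtrace_mulC unit_phi mxtrace1. Qed.

Lemma qform_pure_proj : qform P phi = 1.
Proof. by rewrite /qform /sform /pure_proj !mulmxA unit_phi mul1mx unit_phi mxE. Qed.

Lemma pure_proj_sandwich (X : 'M[C]_m) : P *m X *m P = qform X phi *: P.
Proof.
rewrite /pure_proj /qform /sform.
have -> : phi *m dag phi *m X *m (phi *m dag phi) =
          phi *m (dag phi *m X *m phi) *m dag phi by rewrite !mulmxA.
by rewrite [in LHS](mx11_scalar (dag phi *m X *m phi)) mul_mx_scalar -scalemxAl.
Qed.

Lemma tr_mul_pure_proj (X : 'M[C]_m) : \tr (X *m P) = qform X phi.
Proof. by rewrite /pure_proj mulmxA mxtrace_mulC mulmxA /mxtrace big_ord1. Qed.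

Lemma dag_pure_projC : dag (1%:M - P) = 1%:M - P.
Proof. by rewrite dagB dag1 dag_pure_proj. Qed.

Lemma pure_projC_mul : (1%:M - P) *m P = 0.
Proof. by rewrite mulmxBl mul1mx pure_proj_idem subrr. Qed.

(* Tr M - <phi|M|phi> is the trace of the compression of M to the orthogonal
   complement of phi. *)
Lemma qform_le_tr (M : 'M[C]_m) : psd M -> qform M phi <= \tr M.
Proof.
move=> psdM; set Q := 1%:M - P.
have QQ : Q *m Q = Q by rewrite {1}/Q mulmxBr mulmx1 pure_projC_mul subr0.
have := psd_tr_ge0 (psd_congr Q psdM).
rewrite dag_pure_projC mxtrace_mulC mulmxA QQ /Q mulmxBl mul1mx raddfB /=.
by rewrite mxtrace_mulC tr_mul_pure_proj subr_ge0.
Qed.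

Lemma psd_sqr_pure_projZ (X : 'M[C]_m) c :
  psd X -> X *m X = c *: P -> 0 <= c -> X = sqrtC c *: P.
Proof.
move=> psdX XX c0; have hermX := psd_herm psdX.
have XQ : X *m (1%:M - P) = 0.
  apply: dagmx_mul_self_eq0.
  rewrite dagM dag_pure_projC hermX mulmxA -(mulmxA (1%:M - P)) XX.
  by rewrite -scalemxAr -scalemxAl pure_projC_mul mul0mx scaler0.
have XP : X = X *m P by apply/eqP; rewrite -subr_eq0 -{1}(mulmx1 X) -mulmxBr XQ.
have PX : X = P *m X by rewrite -[LHS]hermX [in LHS]XP dagM dag_pure_proj hermX.
have Xx : X = qform X phi *: P by rewrite -pure_proj_sandwich -PX -XP.
have x0 : 0 <= qform X phi by move/psdE: psdX; apply.
have : qform (X *m X) phi = qform (c *: P) phi by rewrite XX.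
rewrite qformZ qform_pure_proj mulr1 {1 2}Xx -scalemxAl -scalemxAr.
rewrite pure_proj_idem scalerA qformZ qform_pure_proj mulr1.
by move=> <-; rewrite -expr2 sqrCK.
Qed.

Lemma msqrt_pure_projZ c : 0 <= c -> msqrt (c *: P) = sqrtC c *: P.
Proof.
move=> c0; apply: xget_unique; last by move=> X [psdX XX]; apply: psd_sqr_pure_projZ.
split; first by apply: psdZ; rewrite ?sqrtC_ge0 //; exact: psd_pure_proj.
by rewrite -scalemxAl -scalemxAr pure_proj_idem scalerA -expr2 sqrtCK.
Qed.

(* In fact equality holds; only this direction is needed. *)
Lemma fidelity_pure_le (tau : 'M[C]_m) :
  psd tau -> fidelity tau P <= reC (qform tau phi).
Proof.
move=> psd_tau.
have sqrtP : msqrt P = P.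
  by rewrite -{1}(scale1r P) msqrt_pure_projZ // sqrtC1 scale1r.
rewrite /fidelity /trnorm sqrtP; set S := msqrt tau.
have SP : dag (S *m P) *m (S *m P) = qform (dag S *m S) phi *: P.
  rewrite dagM dag_pure_proj (mulmxA (P *m dag S) S P).
  by rewrite -(mulmxA P (dag S) S) pure_proj_sandwich.
have SS_ge0 : 0 <= qform (dag S *m S) phi.
  have -> : qform (dag S *m S) phi = (dag (S *m phi) *m (S *m phi)) 0 0.
    by rewrite /qform /sform dagM !mulmxA.
  exact: dagmx_mul_self_ge0.
rewrite SP msqrt_pure_projZ // mxtraceZ tr_pure_proj mulr1.
rewrite -reC_sqr ?ger0_Im ?sqrtC_ge0 // sqrtCK; apply: reC_le.
rewrite /S; have [->|[psdS SS]] := msqrtP tau; last by rewrite psd_herm // SS.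
by rewrite mulmx0 qform0; move/psdE: psd_tau; apply.
Qed.

End PureState.

Section Positivity.
Variable R : realType.
Local Notation C := (C R).

Lemma cp_psd n m (E : 'M[C]_n -> 'M[C]_m) A : cp E -> psd A -> psd (E A).
Proof.
have sum_pair1 (T : finType) (G : 'I_1 * T -> C) : \sum_p G p = \sum_i G (ord0, i).
  rewrite (eq_bigr (fun p => G (p.1, p.2))); last by case.
  by rewrite -(pair_big xpredT xpredT (fun a i => G (a, i))) big_ord1.
move=> cpE psdA w.
have psdA1 : psdf (fun p q : 'I_1 * 'I_n => A p.2 q.2).
  move=> v; rewrite sum_pair1; under eq_bigr do rewrite sum_pair1.
  exact: (psdA (fun i => v (ord0, i))).
have matrixA : \matrix_(i, j) A i j = A by apply/matrixP => i j; rewrite mxE.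
have sum_pair1_2 (F : 'I_1 * 'I_m -> 'I_1 * 'I_m -> C) :
    \sum_x \sum_y F x y = \sum_i \sum_j F (ord0, i) (ord0, j).
  by rewrite sum_pair1; apply: eq_bigr => i _; exact: sum_pair1.
by have := cpE 1 _ psdA1 (fun p => w p.2); rewrite sum_pair1_2 /= matrixA.
Qed.

Lemma density_le1 n (s : 'M[C]_n) : density s -> lemx s 1%:M.
Proof.
move=> [psd_s tr_s]; apply/psdE => v; rewrite qformB.
set N := qform 1%:M v.
have N_def : (dag v *m v) 0 0 = N by rewrite /N /qform /sform mulmx1.
have [N0|N_neq0] := eqVneq N 0.
  have -> : v = 0.
    by apply: dagmx_mul_self_eq0; apply/matrixP => i j; rewrite !ord1 N_def N0 mxE.
  by rewrite qform0v N0 subrr.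
have N_gt0 : 0 < N by rewrite lt_def N_neq0 -N_def dagmx_mul_self_ge0.
set r := sqrtC N.
have r_gt0 : 0 < r by rewrite sqrtC_gt0.
have conj_rV : (r^-1)^* = r^-1 by apply: geC0_conj; rewrite invr_ge0 ltW.
have rr : r * r = N by rewrite -expr2 sqrtCK.
have unit_v : unit_vec (r^-1 *: v).
  apply/matrixP => i j; rewrite !ord1 [RHS]mxE eqxx /=.
  rewrite dagZ -scalemxAl -scalemxAr scalerA [LHS]mxE conj_rV N_def -rr.
  by field; rewrite gt_eqF.
have := qform_le_tr unit_v psd_s; rewrite tr_s qformZv conj_rV -invfM rr.
by rewrite ler_pdivrMl // mulr1 subr_ge0.
Qed.

Lemma lemx_density_ge1 n (X Y : 'M[C]_n) l : density X -> density Y ->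
  lemx X (toC l *: Y) -> 1 <= l.
Proof.
move=> [_ trX] [_ trY] /psd_tr_ge0.
by rewrite raddfB /= mxtraceZ trX trY mulr1 subr_ge0 -(reC_toC l) => /reC_le.
Qed.

Lemma eigenvalue_psd_ge0 n (A : 'M[C]_n) a : psd A -> eigenvalue A a -> 0 <= a.
Proof.
move=> psdA /eigenvalueP [v va v_neq0].
have qA : qform A (dag v) = a * (v *m dag v) 0 0.
  by rewrite /qform /sform dagK va -scalemxAl mxE.
have vv_gt0 : 0 < (v *m dag v) 0 0.
  have -> : (v *m dag v) 0 0 = (dag (dag v) *m dag v) 0 0 by rewrite dagK.
  rewrite lt_def dagmx_mul_self_ge0 andbT; apply/eqP => vv0.
  have : dag (dag v) *m dag v = 0 by apply/matrixP => i j; rewrite !ord1 vv0 mxE.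
  move/dagmx_mul_self_eq0 => dagv0; move/eqP: v_neq0; apply.
  by rewrite -(dagK v) dagv0; apply/matrixP => i j; rewrite dagE !mxE conjC0.
have := (psdE A).1 psdA (dag v); rewrite qA => qA_ge0.
by rewrite -(mulfK (lt0r_neq0 vv_gt0) a) divr_ge0 // ltW.
Qed.

Lemma psd_diag_mx n (d : 'rV[C]_n) : (forall i, 0 <= d 0 i) -> psd (diag_mx d).
Proof.
move=> d_ge0; apply/psdE => v; rewrite qformE; apply: sumr_ge0 => x _.
rewrite (bigD1 x) //= big1 ?addr0; last first.
  by move=> y /negbTE yx; rewrite mxE eq_sym yx mulr0n mulr0 mul0r.
rewrite mxE eqxx mulr1n mulrAC; apply: mulr_ge0 => //.
by rewrite mulrC mul_conjC_ge0.
Qed.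

(* Spectral theorem: rho = P^* D P with D the diagonal of eigenvalues of rho,
   all of which are at least lmin rho. *)
Lemma lmin_lemx n (rho : 'M[C]_n) : psd rho -> lemx (toC (lmin rho) *: 1%:M) rho.
Proof.
move=> psd_rho; have herm_rho := psd_herm psd_rho.
have dag_trmx (M : 'M[C]_n) : map_mx Num.conj M^T = dag M by rewrite /dag map_trmx.
have normal_rho : rho \is normalmx by apply/eqP; rewrite dag_trmx herm_rho.
set P := spectralmx rho; set D := spectral_diag rho.
have rhoE : rho = invmx P *m diag_mx D *m P by apply/orthomx_spectralP.
have P_unit : P \in unitmx := spectral_unit rho.
have invP : invmx P = dag P.
  by rewrite invmx_unitary ?spectral_unitarymx // dag_trmx.
have eigD i : eigenvalue rho (D 0 i).
  apply/eigenvalueP; exists (delta_mx 0 i *m P).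
    rewrite [in LHS]rhoE !mulmxA mulmxK // -[delta_mx 0 i *m diag_mx D]rowE.
    by rewrite row_diag_mx -scalemxAl.
  apply/negP => /eqP dP0.
  have := congr1 (mulmx^~ (invmx P)) dP0; rewrite /= mulmxK // mul0mx.
  by move=> /matrixP /(_ 0 i); rewrite !mxE !eqxx /= => /eqP; rewrite oner_eq0.
have D_ge0 i : 0 <= D 0 i by apply: eigenvalue_psd_ge0 psd_rho (eigD i).
have lb : has_lbound [set x : R | eigenvalue rho (toC x)].
  by exists 0 => x /eigenvalue_psd_ge0 -/(_ psd_rho); rewrite toC_ge0.
have lmin_le i : toC (lmin rho) <= D 0 i.
  rewrite -(toC_reC (ger0_Im (D_ge0 i))) lecR; apply: (ge_inf lb).
  by rewrite /= toC_reC ?(ger0_Im (D_ge0 i)).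
set c := toC (lmin rho) in lmin_le *; rewrite /lemx.
have -> : rho - c *: 1%:M = dag P *m diag_mx (\row_i (D 0 i - c)) *m P.
  have -> : diag_mx (\row_i (D 0 i - c)) = diag_mx D - c *: 1%:M.
    by apply/matrixP => i j; rewrite !mxE; case: (i == j);
      rewrite ?mulr1n ?mulr0n ?mulr1 ?mulr0 ?subrr.
  by rewrite mulmxBr mulmxBl -scalemxAr -scalemxAl mulmx1 -invP mulVmx // -rhoE.
by apply/psd_congr/psd_diag_mx => i; rewrite mxE subr_ge0.
Qed.

End Positivity.

Section Transformation.
Variable R : realType.
Local Notation C := (C R).

Lemma scaled_gap_le (t p a b x y : R) : 0 < t -> 0 <= p -> x <= 1 ->
  t <= a * p -> b * y - p * x <= b * t - p -> 1 - x <= a * b * (1 - t^-1 * y).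
Proof.
move=> t_gt0 p_ge0 x_le1 t_le overlap_le.
have a_gt0 : 0 < a.
  by rewrite ltNge; apply/negP => a_le0; have := mulr_le0_ge0 a_le0 p_ge0; lra.
have : t * (1 - x) <= a * (b * (t - y)).
  apply: (le_trans (y := a * p * (1 - x))); first by apply: ler_wpM2r; lra.
  by rewrite -mulrA; apply: ler_wpM2l; lra.
have -> : a * b * (1 - t^-1 * y) = t^-1 * (a * (b * (t - y))) by field; lra.
by rewrite ler_pdivlMl.
Qed.

(* With t = Tr E(rho) and E(s) = p s': positivity of E(a s - rho) gives
   t <= a p, and positivity of E(b rho - s) compressed to phi gives
   p (1 - <phi|s'|phi>) <= b (t - <phi|E(rho)|phi>). *)
Lemma RNG_overlap_bound n m (Fin : set 'M[C]_n) (Fout : set 'M[C]_m)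
    (rho s : 'M[C]_n) (phi : 'cV[C]_m) (a b : R)
    (E : {linear 'M[C]_n -> 'M[C]_m}) :
  free_set Fout -> unit_vec phi -> Fin s ->
  lemx rho (toC a *: s) -> lemx s (toC b *: rho) ->
  RNG Fin Fout E -> 0 < \tr (E rho) ->
  exists2 s', Fout s' &
    1 - reC (qform s' phi) <=
    a * b * (1 - reC (qform ((\tr (E rho))^-1 *: E rho) phi)).
Proof.
move=> [_ [_ Fout_density]] unit_phi Fs rho_le s_le [cpE [_ E_free]] t_gt0.
have [s' [p [Fs' [/andP[p_ge0 _] Es]]]] := E_free s Fs.
exists s' => //; have [psd_s' tr_s'] := Fout_density s' Fs'.
set t := \tr (E rho) in t_gt0 *.
have tE : toC (reC t) = t by apply/toC_reC/ger0_Im/ltW.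
rewrite qformZ -tE -toCV reCMl; apply: scaled_gap_le p_ge0 _ _ _.
- by have := reC_lt t_gt0.
- by have := reC_le (qform_le_tr unit_phi psd_s'); rewrite tr_s'.
- have := psd_tr_ge0 (cp_psd cpE rho_le).
  rewrite linearB linearZ /= Es raddfB /= !mxtraceZ tr_s' mulr1 -/t.
  by move/reC_le; rewrite reCB reCMl reC_toC subr_ge0.
- have := qform_le_tr unit_phi (cp_psd cpE s_le).
  rewrite linearB linearZ /= Es qformB !qformZ raddfB /= !mxtraceZ tr_s' mulr1 -/t.
  by move/reC_le; rewrite !reCB !reCMl reC_toC.
Qed.

Lemma qform_norm_le m (D : 'M[C]_m) phi (e : C) :
  (forall i j, `|D i j| <= e) ->
  `|qform D phi| <= e * \sum_x \sum_y `|phi x 0| * `|phi y 0|.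
Proof.
move=> D_le; rewrite qformE mulr_sumr.
apply: le_trans (ler_norm_sum _ _ _) _; apply: ler_sum => x _.
rewrite mulr_sumr; apply: le_trans (ler_norm_sum _ _ _) _; apply: ler_sum => y _.
by rewrite !normrM norm_conjC mulrAC mulrC ler_wpM2r.
Qed.

Lemma closure_qform_le m (A : set 'M[C]_m) phi (tau : 'M[C]_m) (beta : R) :
  (forall y, A y -> reC (qform y phi) <= beta) -> closure A tau ->
  reC (qform tau phi) <= beta.
Proof.
move=> A_le tau_cl; rewrite leNgt; apply/negP => beta_lt.
set N := reC (\sum_x \sum_y `|phi x 0| * `|phi y 0|).
have N_ge0 : 0 <= N.
  by apply: (@reC_le R 0); apply: sumr_ge0 => x _; apply: sumr_ge0 => y _.
set d := reC (qform tau phi) - beta.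
have d_gt0 : 0 < d by rewrite subr_gt0.
have N1_gt0 : 0 < N + 1 by rewrite ltr_wpDl.
have e_gt0 : 0 < toC (d / (N + 1)) by rewrite ltcR divr_gt0.
have [y [Ay [_ tau_y]]] := tau_cl _ (nbhsx_ballx tau _ e_gt0).
have diff_le : `|qform (tau - y) phi| <= toC (d / (N + 1)) *
                 \sum_x \sum_y `|phi x 0| * `|phi y 0|.
  by apply: qform_norm_le => i j; rewrite !mxE; exact/ltW/tau_y.
have diff_re : `|reC (qform (tau - y) phi)| <= d / (N + 1) * N.
  by have := reC_le (le_trans (normc_ge_Re _) diff_le); rewrite reCMl; apply.
rewrite qformB reCB in diff_re.
have dN : d / (N + 1) * N < d by rewrite mulrAC ltr_pdivrMr // ltr_pM2l ?ltrDl.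
have : d <= reC (qform tau phi) - reC (qform y phi) by rewrite lerD2l lerN2 A_le.
move/le_trans/(_ (ler_norm _))/le_lt_trans/(_ (le_lt_trans diff_re dN)).
by rewrite ltxx.
Qed.

End Transformation.

Section ResourceMeasures.
Variable R : realType.
Local Notation C := (C R).
Local Open Scope ereal_scope.

Lemma ler_mul_of_forall_gt (x y w : R) : (0 <= y)%R ->
  (forall q, (w < q)%R -> (x <= q * y)%R) -> (x <= w * y)%R.
Proof.
move=> y_ge0 x_le; apply/ler_addgt0Pr => e e_gt0.
have e'_gt0 : (0 < e / (y + 1))%R by rewrite divr_gt0 // ltr_wpDl.
apply: le_trans (x_le _ (ltr_pwDr e'_gt0 (lexx w))) _.
rewrite mulrDl lerD2l mulrAC ler_pdivrMr ?ltr_wpDl //; nra.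
Qed.

Lemma ler_subr_div (k x y : R) : (0 < k)%R ->
  (y <= 1 - x / k)%R = (x <= k * (1 - y))%R.
Proof. by move=> k_gt0; rewrite lerBrDr addrC -lerBrDr ler_pdivrMr // mulrC. Qed.

Lemma ereal_inf_mul_lt (A B : set R) (q : R) :
  (forall a, A a -> 1 <= a)%R -> (forall b, B b -> 1 <= b)%R ->
  ereal_inf (EFin @` A) * ereal_inf (EFin @` B) < q%:E ->
  exists a b, [/\ A a, B b & (a * b < q)%R].
Proof.
move=> A_ge1 B_ge1.
have inf_ge1 (S : set R) : (forall s, S s -> 1 <= s)%R -> 1 <= ereal_inf (EFin @` S).
  by move=> S_ge1; apply/ereal_infP => _ [s Ss <-]; rewrite lee_fin S_ge1.
have := inf_ge1 _ A_ge1; have := inf_ge1 _ B_ge1.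
case Ax : (ereal_inf (EFin @` A)) => [x| |] //; last first.
  by move=> B_ge1' _; rewrite gt0_mulye // (lt_le_trans _ B_ge1') ?lte_fin.
case By : (ereal_inf (EFin @` B)) => [y| |] //; last first.
  by move=> _ A_ge1'; rewrite gt0_muley // (lt_le_trans _ A_ge1') ?lte_fin.
rewrite !lee_fin => y_ge1 x_ge1.
rewrite -EFinM lte_fin => xy_lt.
have y_gt0 : (0 < y)%R by rewrite (lt_le_trans ltr01).
have : ereal_inf (EFin @` A) < (q / y)%:E by rewrite Ax lte_fin ltr_pdivlMr.
case/ereal_inf_lt => _ [a Aa <-]; rewrite lte_fin ltr_pdivlMr // => ay_lt.
have a_gt0 : (0 < a)%R by rewrite (lt_le_trans ltr01) ?A_ge1.
have : ereal_inf (EFin @` B) < (q / a)%:E by rewrite By lte_fin ltr_pdivlMr // mulrC.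
case/ereal_inf_lt => _ [b Bb <-]; rewrite lte_fin ltr_pdivlMr // => ab_lt.
by exists a, b; rewrite mulrC.
Qed.

Lemma lee_mul_inve (x : R) (y z : \bar R) : (0 < x)%R -> 0 < y -> 0 < z ->
  x%:E * y <= z -> x%:E * z^-1 <= y^-1.
Proof.
move=> x_gt0 y_gt0 z_gt0 xy_le; have yV_ge0 : 0 <= y^-1 by rewrite inve_ge0 ltW.
case: z z_gt0 xy_le => [r| |] //; last by rewrite invey mule0.
rewrite lte_fin => r_gt0.
case: y y_gt0 yV_ge0 => [w| |] //; last by rewrite gt0_muley ?lte_fin.
rewrite lte_fin => w_gt0 _; rewrite -EFinM lee_fin => xw_le.
rewrite !inver !gt_eqF // -EFinM lee_fin.
by rewrite ler_pdivrMr // mulrC ler_pdivlMr // mulrC.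
Qed.

Lemma Rmax_ge1 n (X Y : 'M[C]_n) : density X -> density Y -> 1 <= Rmax X Y.
Proof.
move=> dX dY; apply/ereal_infP => _ [l lXY <-].
by rewrite lee_fin (lemx_density_ge1 dX dY lXY).
Qed.

Lemma RF_ge1 n (Fin : set 'M[C]_n) rho : free_set Fin -> density rho ->
  1 <= RF Fin rho.
Proof.
move=> [_ [_ Fin_density]] drho; apply/ereal_infP => _ [s Fs <-].
exact: Rmax_ge1 (Fin_density s Fs).
Qed.

Lemma OmegaF_ge1 n (Fin : set 'M[C]_n) rho : free_set Fin -> density rho ->
  1 <= OmegaF Fin rho.
Proof.
move=> [_ [_ Fin_density]] drho; apply/ereal_infP => _ [s Fs <-].
have ds := Fin_density s Fs; rewrite -(mule1 1).
by apply: lee_pmul => //; apply: Rmax_ge1.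
Qed.

Lemma OmegaF_lt n (Fin : set 'M[C]_n) rho (q : R) :
  free_set Fin -> density rho -> OmegaF Fin rho < q%:E ->
  exists s a b, [/\ Fin s, lemx rho (toC a *: s), lemx s (toC b *: rho)
                  & (a * b < q)%R].
Proof.
move=> [_ [_ Fin_density]] drho /ereal_inf_lt [_ [s Fs <-]].
have ds := Fin_density s Fs.
move/ereal_inf_mul_lt => /(_ (fun a => lemx_density_ge1 drho ds))
  /(_ (fun b => lemx_density_ge1 ds drho)) [a [b [rho_le s_le ab_lt]]].
by exists s, a, b.
Qed.

Lemma FF_le1 m (Fout : set 'M[C]_m) phi : free_set Fout -> unit_vec phi ->
  FF Fout phi <= 1.
Proof.
move=> [_ [_ Fout_density]] unit_phi; apply/ereal_supP => _ [s Fs <-].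
have [psd_s tr_s] := Fout_density s Fs.
by rewrite lee_fin; have := reC_le (qform_le_tr unit_phi psd_s); rewrite tr_s.
Qed.

Lemma prob_trans_free_image n m (Fin : set 'M[C]_n) (Fout : set 'M[C]_m)
    rho tau s :
  prob_trans Fin Fout rho tau -> Fin s -> exists s', Fout s'.
Proof.
move=> tau_cl Fs.
have [_ [[E [[_ [_ E_free]] _] _] _]] := tau_cl _ (nbhsx_ballx tau _ ltr01).
by have [s' [p [Fs' _]]] := E_free s Fs; exists s'.
Qed.

End ResourceMeasures.

Section Bounds.
Variable R : realType.
Local Notation C := (C R).
Variables (n m : nat) (Fin : set 'M[C]_n) (Fout : set 'M[C]_m).
Variables (rho : 'M[C]_n) (phi : 'cV[C]_m) (tau : 'M[C]_m).
Hypotheses (free_Fin : free_set Fin) (free_Fout : free_set Fout).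
Hypotheses (density_rho : density rho) (unit_phi : unit_vec phi).
Hypothesis trans_rho_tau : prob_trans Fin Fout rho tau.

Lemma prob_trans_overlap_bound (f : R) s a b :
  (forall s', Fout s' -> reC (qform s' phi) <= f) ->
  Fin s -> lemx rho (toC a *: s) -> lemx s (toC b *: rho) ->
  1 - f <= a * b * (1 - reC (qform tau phi)).
Proof.
move=> f_ge Fs rho_le s_le.
have ds : density s by case: free_Fin => _ [_]; apply.
have ab_gt0 : 0 < a * b.
  apply: mulr_gt0; apply: lt_le_trans ltr01 _.
    exact: lemx_density_ge1 density_rho ds rho_le.
  exact: lemx_density_ge1 ds density_rho s_le.
rewrite -ler_subr_div //; apply: closure_qform_le trans_rho_tau => _ [E [RNG_E t_gt0] <-].
have [s' Fs' s'_le] := RNG_overlap_bound free_Fout unit_phi Fs rho_le s_le RNG_E t_gt0.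
by rewrite ler_subr_div //; apply: le_trans s'_le; rewrite lerD2l lerN2 f_ge.
Qed.

Local Open Scope ereal_scope.

Lemma overlap_gap_le_OmegaF (f w : R) :
  (forall s', Fout s' -> reC (qform s' phi) <= f)%R -> OmegaF Fin rho = w%:E ->
  (reC (qform tau phi) <= 1)%R -> (1 - f <= w * (1 - reC (qform tau phi)))%R.
Proof.
move=> f_ge Omega_w tau_le1; apply: ler_mul_of_forall_gt; first by rewrite subr_ge0.
move=> q w_lt; have : OmegaF Fin rho < q%:E by rewrite Omega_w lte_fin.
case/(OmegaF_lt free_Fin density_rho) => s [a [b [Fs rho_le s_le ab_lt]]].
apply: le_trans (prob_trans_overlap_bound f_ge Fs rho_le s_le) _.
by apply: ler_wpM2r; [rewrite subr_ge0 | exact: ltW].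
Qed.

Lemma OmegaF_overlap_bound : density tau ->
  (1%:E - FF Fout phi) * (OmegaF Fin rho)^-1 <= (1 - reC (qform tau phi))%:E.
Proof.
move=> [psd_tau tr_tau].
have tau_le1 : (reC (qform tau phi) <= 1)%R.
  by have := reC_le (qform_le_tr unit_phi psd_tau); rewrite tr_tau.
have := OmegaF_ge1 free_Fin density_rho.
case EO : (OmegaF Fin rho) => [w| |] // w_ge1; last first.
  by rewrite invey mule0 lee_fin subr_ge0.
have : OmegaF Fin rho < (w + 1)%:E by rewrite EO lte_fin ltrDl.
case/(OmegaF_lt free_Fin density_rho) => s0 [_ [_ [Fs0 _ _ _]]].
have [s1 Fs1] := prob_trans_free_image trans_rho_tau Fs0.
have FF_ge s' : Fout s' -> (reC (qform s' phi))%:E <= FF Fout phi.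
  by move=> Fs'; apply: ereal_sup_ubound; exists s'.
have := FF_le1 free_Fout unit_phi; have := FF_ge s1 Fs1.
case EF : (FF Fout phi) => [f| |] // _ _.
have f_ge s' : Fout s' -> (reC (qform s' phi) <= f)%R.
  by move=> Fs'; rewrite -lee_fin -EF FF_ge.
have w_gt0 : (0 < w)%R by rewrite lee_fin in w_ge1; apply: lt_le_trans w_ge1.
rewrite inver gt_eqF // -EFinB -EFinM lee_fin ler_pdivrMr // mulrC.
exact: overlap_gap_le_OmegaF.
Qed.

Lemma lmin_mul_OmegaF_le_RF : (0 < lmin rho)%R ->
  (lmin rho)%:E * OmegaF Fin rho <= RF Fin rho.
Proof.
move=> lmin_gt0; have [_ [_ Fin_density]] := free_Fin.
apply/ereal_infP => _ [s Fs <-]; have ds := Fin_density s Fs.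
have s_le : Rmax s rho <= ((lmin rho)^-1)%:E.
  apply: ereal_inf_lbound; exists (lmin rho)^-1%R => //.
  set l := lmin rho in lmin_gt0 *; rewrite /lemx /=.
  have -> : (toC l^-1 *: rho - s = toC l^-1 *: (rho - toC l *: 1%:M) + (1%:M - s))%R.
    by rewrite scalerBr scalerA -toCM mulVf ?gt_eqF // scale1r addrA subrK.
  apply: psdD; last exact: density_le1.
  by apply: psdZ; [rewrite toC_ge0 invr_ge0 ltW | exact: lmin_lemx density_rho.1].
have Omega_le : OmegaF Fin rho <= Rmax rho s * ((lmin rho)^-1)%:E.
  apply: le_trans (_ : Rmax rho s * Rmax s rho <= _).
    by apply: ereal_inf_lbound; exists s.
  by apply: lee_wpmul2l s_le; apply: le_trans (Rmax_ge1 density_rho ds).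
apply: le_trans (lee_wpmul2l (ltW lmin_gt0 : 0 <= (lmin rho)%:E) Omega_le) _.
by rewrite muleCA -EFinM mulfV ?gt_eqF // mule1.
Qed.

End Bounds.

Unset Implicit Arguments.

Theorem lemma4 (R : realType) (n m : nat)
  (Fin : set 'M[C R]_n) (Fout : set 'M[C R]_m)
  (rho : 'M[C R]_n) (phi : 'cV[C R]_m) (tau : 'M[C R]_m) (eps : R) :
  free_set Fin -> free_set Fout ->
  density rho ->
  unit_vec phi -> ~ Fout (pure_proj phi) ->
  density tau ->
  prob_trans Fin Fout rho tau ->
  1 - eps <= fidelity tau (pure_proj phi) ->
  ((1%:E - FF Fout phi) * (OmegaF Fin rho)^-1 <= eps%:E)%E /\
  ((lmin rho)%:E * (1%:E - FF Fout phi) * (RF Fin rho)^-1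
     <= (1%:E - FF Fout phi) * (OmegaF Fin rho)^-1)%E.
Proof.
move=> free_Fin free_Fout density_rho unit_phi _ density_tau trans fid_ge.
have gap_le_eps : 1 - reC (qform tau phi) <= eps.
  by have := fidelity_pure_le unit_phi density_tau.1; lra.
have Omega_ge0 := le_trans lee01 (OmegaF_ge1 free_Fin density_rho).
have RF_gt0 := lt_le_trans lte01 (RF_ge1 free_Fin density_rho).
have gap_ge0 : (0 <= 1%:E - FF Fout phi)%E.
  by rewrite sube_ge0 ?FF_le1 // orbC.
split.
  apply: le_trans (OmegaF_overlap_bound free_Fin free_Fout density_rho unit_phi
    trans density_tau) _.
  by rewrite lee_fin.
have [lmin_le0|lmin_gt0] := lerP (lmin rho) 0.
  apply: (@le_trans _ _ 0%E); last by rewrite mule_ge0 ?inve_ge0.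
  by rewrite mule_le0_ge0 ?mule_le0_ge0 ?inve_ge0 ?lee_fin // ltW.
rewrite (muleC (lmin rho)%:E) -muleA; apply: (lee_wpmul2l gap_ge0).
apply: lee_mul_inve => //; first by apply: lt_le_trans (OmegaF_ge1 _ _).
exact: lmin_mul_OmegaF_le_RF.
Qed.
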